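(* Let $\mu$ be a Borel probability measure on $\mathbb{R}^d$ with $\operatorname{spt}(\mu)\subseteq[0,1]^d$. If $\mathcal{Z}(\mu)\neq\emptyset$, then $\operatorname{spt}(\mu)\subseteq[0,1]^d\setminus(0,1)^d$.
   Context: $\operatorname{spt}(\mu)$ is the support of $\mu$ (smallest closed set of full measure). $\widehat{\mu}(\xi)=\int e^{-2\pi i\xi\cdot x}d\mu(x)$ and $\mathcal{Z}(\mu)=\{\xi\in\mathbb{R}^d:\widehat{\mu}(\xi+k)=0\text{ for all }k\in\mathbb{Z}^d\}$. *)

From HB Require Import structures.
From mathcomp Require Import all_boot all_order all_algebra.
From mathcomp Require Import all_classical all_reals all_analysis.
From mathcomp Require Import complex.
Set Implicit Arguments. Unset Strict Implicit. Unset Printing Implicit Defensive.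
Import Order.TTheory GRing.Theory Num.Theory.
Import numFieldNormedType.Exports.
Local Open Scope classical_set_scope.
Local Open Scope ring_scope.

(* R^d is 'rV[R]_d (row vectors, with their usual topology).  The Borel
   sigma-algebra on R^d is the sigma-algebra generated by its open sets. *)
Notation borelRd R d := (g_sigma_algebraType (@open 'rV[R%type]_d)).

Definition dotRd (R : realType) (d : nat) (xi x : 'rV[R]_d) : R :=
  \sum_(i < d) xi ord0 i * x ord0 i.

Definition spt (R : realType) (d : nat)
  (mu : probability (borelRd R d) R) : set 'rV[R]_d :=
  \bigcap_(C in [set C : set 'rV[R]_d | closed C /\
                  mu (~` C : set (borelRd R d)) = 0%E]) C.

(* Fourier transform  mu^(xi) = \int e^{-2 pi i xi.x} dmu(x)
   = \int cos(2 pi xi.x) dmu - i \int sin(2 pi xi.x) dmu. *)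
Definition fourier (R : realType) (d : nat)
  (mu : probability (borelRd R d) R) (xi : 'rV[R]_d) : R[i] :=
  Complex (Rintegral mu setT (fun x : borelRd R d => cos (2 * pi * dotRd xi x)))
          (- Rintegral mu setT (fun x : borelRd R d => sin (2 * pi * dotRd xi x))).

Definition Zset (R : realType) (d : nat)
  (mu : probability (borelRd R d) R) : set 'rV[R]_d :=
  [set xi | forall k : 'rV[int]_d,
     fourier mu (xi + map_mx (fun z : int => z%:~R) k) = 0].

Definition closed_cube (R : realType) (d : nat) : set 'rV[R]_d :=
  [set x | forall i : 'I_d, 0 <= x ord0 i <= 1].
Definition open_cube (R : realType) (d : nat) : set 'rV[R]_d :=
  [set x | forall i : 'I_d, 0 < x ord0 i < 1].
Arguments closed_cube R d : clear implicits.
Arguments open_cube R d : clear implicits.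

From HB Require Import structures.
From mathcomp Require Import all_boot all_order all_algebra.
From mathcomp Require Import all_classical all_reals all_analysis.
From mathcomp Require Import complex.
From mathcomp Require Import ring lra.
Import Order.TTheory GRing.Theory Num.Theory.
Import numFieldNormedType.Exports.
Local Open Scope classical_set_scope.
Local Open Scope ring_scope.
Set Implicit Arguments. Unset Strict Implicit.

(* Fix xi in Z(mu).  Every real trigonometric polynomial with frequencies in
   xi + Z^d integrates to zero against mu, and this class is stable under
   multiplication by trigonometric polynomials with integer frequencies.  Let a
   lie in the open cube, h(x) = cos 2 pi xi.(x - a) and
   q(x) = prod_j (1 + cos 2 pi (x_j - a_j)) / 2, so that h(a) = q(a) = 1.
   Since q is 1-periodic and a is interior, q <= B < 1 on the part of the closed
   cube away from a, whereas h > 1/2 near a.  Hence for B < B' < 1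
   0 = int h q^N dmu >= B'^N / 2 * mu {q > B'} - B^N  for every N,
   so the open neighbourhood {q > B'} of a is mu-null and a is not in spt mu. *)

Lemma le0_geometric (R : realType) (m r : R) : 0 <= r < 1 ->
  (forall N, m <= r ^+ N) -> m <= 0.
Proof.
move=> /andP[r0 r1] mr.
have r_pow0 : (GRing.exp r : R^nat) @ \oo --> 0 by apply: cvg_expr; rewrite ger0_norm.
by apply: (cvgr_to_ge r_pow0); near=> N; exact: mr.
Unshelve. all: by end_near.
Qed.

Section MomentBounds.
Context {dT : measure_display} {T : measurableType dT} {R : realType}.
Variable mu : probability T R.

Lemma moment_mass_bound (A W : set T) (g : T -> R) (lo hi : R) :
  measurable A -> mu A = 0%E -> measurable W -> 0 <= lo ->
  mu.-integrable setT (EFin \o g) -> \int[mu]_x g x = 0 ->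
  (forall x, ~ A x -> W x -> hi <= g x) -> (forall x, ~ A x -> ~ W x -> - lo <= g x) ->
  hi * fine (mu (~` A `&` W)) <= lo.
Proof.
move=> mA A0 mW lo0 gint g0 gW gnW.
have mAW : measurable (~` A `&` W) by apply: measurableI => //; exact: measurableC.
have mAnW : measurable (~` A `&` ~` W) by apply: measurableI; exact: measurableC.
have gAW : \int[mu]_(x in ~` A `&` W) hi <= \int[mu]_(x in ~` A `&` W) g x.
  apply: le_Rintegral => //; first exact: finite_measure_integrable_cst.
    exact: integrableS gint.
  by move=> x [nAx Wx]; exact: gW.
have gAnW : \int[mu]_(x in ~` A `&` ~` W) (- lo) <= \int[mu]_(x in ~` A `&` ~` W) g x.
  apply: le_Rintegral => //; first exact: finite_measure_integrable_cst.
    exact: integrableS gint.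
  by move=> x [nAx nWx]; exact: gnW.
have splitA : ~` A = (~` A `&` W) `|` (~` A `&` ~` W) by rewrite -setIUr setUv setIT.
have : \int[mu]_(x in ~` A) g x = 0.
  by rewrite -setTD /Rintegral -negligible_integral.
rewrite {1}splitA Rintegral_setU //.
- rewrite !Rintegral_cst // in gAW gAnW.
  have mass_le1 : fine (mu (~` A `&` ~` W)) <= 1.
    by rewrite -lee_fin fineK ?fin_num_measure //; exact: probability_le1.
  have mass_ge0 : 0 <= fine (mu (~` A `&` ~` W)) by apply: fine_ge0; exact: measure_ge0.
  by move=> sum0; nra.
- by rewrite -splitA; apply: integrableS gint => //; exact: measurableC.
- by apply/eqP; rewrite -setIIr setICr setI0.
Qed.

Lemma null_of_moment_bounds (D W : set T) (f : nat -> T -> R) (b c k : R) :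
  mu.-negligible (~` D) -> measurable W -> 0 <= b -> b < c -> 0 < k ->
  (forall N, mu.-integrable setT (EFin \o f N)) -> (forall N, \int[mu]_x f N x = 0) ->
  (forall N x, D x -> W x -> k * c ^+ N <= f N x) ->
  (forall N x, D x -> ~ W x -> - b ^+ N <= f N x) ->
  mu W = 0%E.
Proof.
move=> [A [mA A0 DA]] mW b0 bc k0 fint f0 fW fnW.
have inD x : ~ A x -> D x by move=> nAx; apply: contrapT => /DA.
have mAW : measurable (~` A `&` W) by apply: measurableI => //; exact: measurableC.
have c0 : 0 < c by exact: le_lt_trans bc.
have mass_le0 : fine (mu (~` A `&` W)) <= 0.
  rewrite -(pmulr_rle0 _ k0); apply: (@le0_geometric _ _ (b / c)).
    by rewrite divr_ge0 ?(ltW c0) //= ltr_pdivrMr // mul1r.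
  move=> N; rewrite expr_div_n ler_pdivlMr ?exprn_gt0 // mulrAC.
  apply: moment_mass_bound mA A0 mW (exprn_ge0 N b0) (fint N) (f0 N) _ _.
  - by move=> x /inD Dx Wx; exact: fW.
  - by move=> x /inD Dx nWx; exact: fnW.
have AW0 : mu (~` A `&` W) = 0%E.
  rewrite -[LHS]fineK ?fin_num_measure //; congr EFin.
  by apply/eqP; rewrite eq_le mass_le0 fine_ge0 ?measure_ge0.
apply/(negligibleP mu mW); apply: negligibleS (negligibleU
  (proj2 (negligibleP mu mAW) AW0) (proj2 (negligibleP mu mA) A0)).
by move=> x Wx; have [Ax|nAx] := pselect (A x); [right | left].
Qed.

End MomentBounds.

Section Rd.
Context {R : realType} {d : nat}.
Implicit Types (a u v x y : 'rV[R]_d) (k l : 'rV[int]_d).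

Lemma continuous_measurable_rV (f : 'rV[R]_d -> R) : continuous f ->
  measurable_fun [set: borelRd R d] f.
Proof.
move=> cf; apply: (measurability _ (measurable_realfun.RGenOpens.measurableE R)).
move=> _ [_ [a [b ->] <-]]; rewrite setTI; apply: sub_sigma_algebra.
by apply: open_comp; [move=> x _; exact: cf | exact: interval_open].
Qed.

Lemma continuous_bounded_integrable (mu : probability (borelRd R d) R)
    {f : 'rV[R]_d -> R} {M : R} :
  continuous f -> (forall x, `|f x| <= M) ->
  mu.-integrable [set: borelRd R d] (EFin \o f).
Proof.
move=> cf fM; apply: measurable_bounded_integrable => //.
- by rewrite -[X in (X < _)%E]/(mu setT) probability_setT ltry.
- exact: continuous_measurable_rV.
- exists M; split; first by rewrite num_real.
  by move=> y My x _ /=; apply: le_trans (fM x) _; exact: ltW.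
Qed.

(* [continuousD] and [continuousM] do not apply to goals [continuous f] with
   [f : 'rV[R]_d -> R]: there the domain only carries its [nbhsType] instance. *)
Lemma continuousD_rV (f g : 'rV[R]_d -> R) :
  continuous f -> continuous g -> continuous (fun x => f x + g x).
Proof. by move=> cf cg x; exact: cvgD (cf x) (cg x). Qed.

Lemma continuousM_rV (f g : 'rV[R]_d -> R) :
  continuous f -> continuous g -> continuous (fun x => f x * g x).
Proof. by move=> cf cg x; exact: cvgM (cf x) (cg x). Qed.

Lemma continuous_dotRd v : continuous (dotRd v).
Proof.
rewrite /dotRd; apply: continuous_big => [|i _ x]; first exact: add_continuous.
by apply: continuousM; [exact: cst_continuous | exact: coord_continuous].
Qed.

Lemma dotRdDl u v x : dotRd (u + v) x = dotRd u x + dotRd v x.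
Proof. by rewrite /dotRd -big_split /=; apply: eq_bigr => i _; rewrite mxE mulrDl. Qed.

Lemma dotRdNl u x : dotRd (- u) x = - dotRd u x.
Proof. by rewrite /dotRd -sumrN; apply: eq_bigr => i _; rewrite mxE mulNr. Qed.

Definition int_rV k : 'rV[R]_d := map_mx (fun z : int => z%:~R) k.

Lemma int_rVD k l : int_rV (k + l) = int_rV k + int_rV l.
Proof. by apply/rowP => j; rewrite !mxE intrD. Qed.

Lemma int_rVN k : int_rV (- k) = - int_rV k.
Proof. by apply/rowP => j; rewrite !mxE intrN. Qed.

Lemma int_rV0 : int_rV 0 = 0.
Proof. by apply/rowP => j; rewrite !mxE. Qed.

Lemma dotRd_int_rV_delta (j : 'I_d) x : dotRd (int_rV (delta_mx 0 j)) x = x ord0 j.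
Proof.
rewrite /dotRd (bigD1 j) //= big1 ?addr0; first by rewrite !mxE !eqxx mul1r.
by move=> i ij; rewrite !mxE (negbTE ij) andbF mul0r.
Qed.

Lemma continuous_phase v : continuous (fun x => 2 * pi * dotRd v x).
Proof.
by move=> x; apply: continuous_comp; [exact: continuous_dotRd | exact: mulrl_continuous].
Qed.

Definition wave v (th : R) x : R := cos (2 * pi * dotRd v x + th).

Lemma continuous_wave v th : continuous (wave v th).
Proof.
move=> x; apply: continuous_comp; last exact: continuous_cos.
by apply: continuousD; [exact: continuous_phase | exact: cst_continuous].
Qed.

Lemma wave_le1 v th x : `|wave v th x| <= 1.
Proof. exact: cos_max. Qed.

Lemma waveM u v (al be : R) x :
  wave u al x * wave v be x = (wave (u + v) (al + be) x + wave (u - v) (al - be) x) / 2.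
Proof.
rewrite /wave dotRdDl dotRdDl dotRdNl.
set s := 2 * pi * dotRd u x + al; set t := 2 * pi * dotRd v x + be.
have -> : 2 * pi * (dotRd u x + dotRd v x) + (al + be) = s + t by rewrite /s /t; ring.
have -> : 2 * pi * (dotRd u x + - dotRd v x) + (al - be) = s - t by rewrite /s /t; ring.
by rewrite (cosD s t) (cosB s t); field.
Qed.

Lemma Zset_wave_integral (mu : probability (borelRd R d) R) (xi : 'rV[R]_d) k th :
  Zset mu xi -> \int[mu]_x wave (xi + int_rV k) th x = 0.
Proof.
move=> /(_ k) /eqP; rewrite eq_complex /= -/(int_rV k) oppr_eq0.
set v := xi + int_rV k => /andP[/eqP cos0 /eqP sin0].
have cos_int : mu.-integrable setT (EFin \o fun x => cos (2 * pi * dotRd v x)).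
  apply: (continuous_bounded_integrable mu (M := 1)); last by move=> x; exact: cos_max.
  by move=> x; apply: continuous_comp; [exact: continuous_phase | exact: continuous_cos].
have sin_int : mu.-integrable setT (EFin \o fun x => sin (2 * pi * dotRd v x)).
  apply: (continuous_bounded_integrable mu (M := 1)); last by move=> x; exact: sin_max.
  by move=> x; apply: continuous_comp; [exact: continuous_phase | exact: continuous_sin].
rewrite /wave; under eq_Rintegral do rewrite cosD.
rewrite RintegralB //; last 2 first.
- apply: eq_integrable measurableT _ _ _ (integrableZr measurableT (cos th) cos_int).
  by move=> x _; rewrite /= EFinM.
- apply: eq_integrable measurableT _ _ _ (integrableZr measurableT (sin th) sin_int).
  by move=> x _; rewrite /= EFinM.
by rewrite !RintegralZr // cos0 sin0 !mul0r subr0.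
Qed.

Section CosetTrigpoly.
Variable xi : 'rV[R]_d.

Inductive coset_trigpoly : ('rV[R]_d -> R) -> Prop :=
| coset_trigpoly0 : coset_trigpoly (fun _ => 0)
| coset_trigpoly_wave k c th g : coset_trigpoly g ->
    coset_trigpoly (fun x => c * wave (xi + int_rV k) th x + g x).

Lemma eq_coset_trigpoly {g h} : g =1 h -> coset_trigpoly g -> coset_trigpoly h.
Proof. by move=> /funext <-. Qed.

Lemma coset_trigpolyD g h :
  coset_trigpoly g -> coset_trigpoly h -> coset_trigpoly (fun x => g x + h x).
Proof.
move=> pg ph; elim: pg => [|k c th g' _ IH].
  by apply: eq_coset_trigpoly _ ph => x; rewrite add0r.
by apply: eq_coset_trigpoly _ (coset_trigpoly_wave k c th IH) => x; rewrite addrA.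
Qed.

Lemma coset_trigpolyZ (a : R) g :
  coset_trigpoly g -> coset_trigpoly (fun x => a * g x).
Proof.
elim => [|k c th g' _ IH].
  by apply: eq_coset_trigpoly _ coset_trigpoly0 => x; rewrite mulr0.
by apply: eq_coset_trigpoly _ (coset_trigpoly_wave k (a * c) th IH) => x; ring.
Qed.

Lemma coset_trigpolyM_wave g l (ph : R) :
  coset_trigpoly g -> coset_trigpoly (fun x => g x * wave (int_rV l) ph x).
Proof.
elim => [|k c th g' _ IH].
  by apply: eq_coset_trigpoly _ coset_trigpoly0 => x; rewrite mul0r.
apply: eq_coset_trigpoly
  (coset_trigpoly_wave (k + l) (c / 2) (th + ph)
    (coset_trigpoly_wave (k - l) (c / 2) (th - ph) IH)) => x.
rewrite [RHS]mulrDl -[c * wave _ _ _ * _]mulrA waveM !int_rVD !int_rVN !addrA; ring.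
Qed.

Lemma coset_trigpoly_wave_self th : coset_trigpoly (wave xi th).
Proof.
apply: eq_coset_trigpoly _ (coset_trigpoly_wave 0 1 th coset_trigpoly0) => x.
by rewrite int_rV0 addr0 mul1r addr0.
Qed.

Lemma continuous_coset_trigpoly {g} : coset_trigpoly g -> continuous g.
Proof.
elim => [|k c th g' _ cg']; first exact: cst_continuous.
apply: continuousD_rV cg'.
apply: continuousM_rV; [exact: cst_continuous | exact: continuous_wave].
Qed.

Lemma bounded_coset_trigpoly {g} : coset_trigpoly g -> exists M, forall x, `|g x| <= M.
Proof.
elim => [|k c th g' _ [M g'M]]; first by exists 0 => x; rewrite normr0.
exists (`|c| + M) => x; rewrite (le_trans (ler_normD _ _)) // lerD //.
by rewrite normrM -[leRHS]mulr1 ler_wpM2l // wave_le1.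
Qed.

Lemma Zset_coset_trigpoly_integral (mu : probability (borelRd R d) R) g :
  Zset mu xi -> coset_trigpoly g -> \int[mu]_x g x = 0.
Proof.
move=> Zxi; elim => [|k c th g' pg' IH]; first by rewrite Rintegral_cst // mul0r.
have [M g'M] := bounded_coset_trigpoly pg'.
have wave_int : mu.-integrable setT (EFin \o wave (xi + int_rV k) th).
  by apply: continuous_bounded_integrable; [exact: continuous_wave | exact: wave_le1].
rewrite RintegralD //.
- by rewrite RintegralZl // Zset_wave_integral // mulr0 IH addr0.
- apply: (continuous_bounded_integrable mu (M := `|c|)).
    by apply: continuousM_rV; [exact: cst_continuous | exact: continuous_wave].
  by move=> x; rewrite normrM -[leRHS]mulr1 ler_wpM2l // wave_le1.
- exact: continuous_bounded_integrable (continuous_coset_trigpoly pg') g'M.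
Qed.

End CosetTrigpoly.

Definition peak (a x : 'rV[R]_d) : R :=
  \prod_(j < d) ((1 + cos (2 * pi * (x ord0 j - a ord0 j))) / 2).

Lemma peak_factor_wave (a x : 'rV[R]_d) (j : 'I_d) :
  (1 + cos (2 * pi * (x ord0 j - a ord0 j))) / 2 =
  2^-1 + 2^-1 * wave (int_rV (delta_mx 0 j)) (- (2 * pi * a ord0 j)) x.
Proof. by rewrite /wave dotRd_int_rV_delta mulrBr; field. Qed.

Lemma coset_trigpolyM_peak xi a g (N : nat) :
  coset_trigpoly xi g -> coset_trigpoly xi (fun x => g x * peak a x ^+ N).
Proof.
have mul_factors (s : seq 'I_d) h : coset_trigpoly xi h -> coset_trigpoly xi
    (fun x => h x * \prod_(j <- s) ((1 + cos (2 * pi * (x ord0 j - a ord0 j))) / 2)).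
  elim: s h => [|j s IH] h ph.
    by apply: eq_coset_trigpoly _ ph => x; rewrite big_nil mulr1.
  have ph' := coset_trigpolyD (coset_trigpolyZ 2^-1 ph)
    (coset_trigpolyZ 2^-1 (coset_trigpolyM_wave (delta_mx 0 j) (- (2 * pi * a ord0 j)) ph)).
  apply: eq_coset_trigpoly _ (IH _ ph') => x.
  by rewrite big_cons peak_factor_wave; ring.
move=> pg; elim: N => [|N IH]; first by apply: eq_coset_trigpoly _ pg => x; rewrite mulr1.
by apply: eq_coset_trigpoly _ (mul_factors _ _ IH) => x; rewrite exprS /peak; ring.
Qed.

Lemma peak_factor_ge0 (t : R) : 0 <= (1 + cos t) / 2.
Proof. by have := cos_geN1 t; lra. Qed.

Lemma peak_factor_le1 (t : R) : (1 + cos t) / 2 <= 1.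
Proof. by have := cos_le1 t; lra. Qed.

Lemma peak_ge0 a x : 0 <= peak a x.
Proof. by apply: prodr_ge0 => j _; exact: peak_factor_ge0. Qed.

Lemma peak_le1 a x : peak a x <= 1.
Proof. by apply: prodr_ile1 => j _; rewrite peak_factor_ge0 peak_factor_le1. Qed.

Lemma peak_id a : peak a a = 1.
Proof. by rewrite /peak big1 // => j _; rewrite subrr mulr0 cos0; field. Qed.

Lemma continuous_peak a : continuous (peak a).
Proof.
apply: continuous_big => [|j _]; first exact: mul_continuous.
under eq_fun do rewrite peak_factor_wave.
by apply: continuousD_rV; [exact: cst_continuous |
  apply: continuousM_rV; [exact: cst_continuous | exact: continuous_wave]].
Qed.
Lemma continuous_peakX a (N : nat) : continuous (fun x => peak a x ^+ N).
Proof.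
elim: N => [|N IH]; first exact: cst_continuous.
by under eq_fun do rewrite exprS; exact: continuousM_rV (continuous_peak (a := a)) IH.
Qed.

Lemma wave_peakX_integrable (mu : probability (borelRd R d) R) v th a (N : nat) :
  mu.-integrable setT (EFin \o fun x => wave v th x * peak a x ^+ N).
Proof.
apply: (continuous_bounded_integrable mu (M := 1)).
  by apply: continuousM_rV; [exact: continuous_wave | exact: continuous_peakX].
move=> x; rewrite normrM -[leRHS]mulr1; apply: ler_pM => //; first exact: wave_le1.
by rewrite normrX ger0_norm ?peak_ge0 // exprn_ile1 ?peak_ge0 ?peak_le1.
Qed.

Lemma wave_gt_half_near v a :
  exists2 e : R, 0 < e & ball a e `<=` [set x | 1/2 < wave v (- (2 * pi * dotRd v a)) x].
Proof.
have : nbhs a (wave v (- (2 * pi * dotRd v a)) @^-1`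
    ball (wave v (- (2 * pi * dotRd v a)) a) (1/2)).
  by apply: continuous_wave; exact: nbhsx_ballx.
move=> /nbhs_ballP [e e0 ball_e]; exists e => // x /ball_e.
by rewrite /ball /= {1}/wave addrN cos0 ltr_norml => /andP[? ?]; lra.
Qed.

Lemma cos2pi_le_margin (del u : R) : 0 <= del -> del <= u <= 1 - del ->
  cos (2 * pi * u) <= cos (2 * pi * del).
Proof.
move=> del0 /andP[delu u1]; have pi0 := pi_gt0 R.
have near0 (v : R) : del <= v -> v <= 1/2 -> cos (2 * pi * v) <= cos (2 * pi * del).
  move=> delv v2.
  have iv : 2 * pi * v \in `[0, pi] by rewrite in_itv /=; apply/andP; split; nra.
  have id : 2 * pi * del \in `[0, pi] by rewrite in_itv /=; apply/andP; split; nra.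
  by rewrite leNgt (ltr_cos iv id) -leNgt; nra.
have [u2|u2] := leP u (1/2); first exact: near0.
have -> : cos (2 * pi * u) = cos (2 * pi * (1 - u)).
  rewrite -(cosN (2 * pi * (1 - u))) -(cosD2pi (- (2 * pi * (1 - u)))); congr cos.
  by rewrite mulr2n; ring.
by apply: near0; lra.
Qed.

Lemma cos2pi_lt1 (del : R) : 0 < del -> del <= 1/2 -> cos (2 * pi * del) < 1.
Proof.
move=> del0 del2; have pi0 := pi_gt0 R.
have iv : 2 * pi * del \in `[0, pi] by rewrite in_itv /=; apply/andP; split; nra.
have i0 : (0 : R) \in `[0, pi] by rewrite in_itv /= lexx ltW.
by rewrite -[X in _ < X]cos0 (ltr_cos i0 iv); nra.
Qed.

Lemma peak_le_margin a x (del : R) (j : 'I_d) :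
  0 <= del -> del <= a ord0 j <= 1 - del -> 0 <= x ord0 j <= 1 ->
  del <= `|x ord0 j - a ord0 j| -> peak a x <= (1 + cos (2 * pi * del)) / 2.
Proof.
move=> del0 /andP[da ad] /andP[x0 x1] dx.
rewrite /peak (bigD1 j) //=; apply: le_trans (ler_piMr _ _) _.
- exact: peak_factor_ge0.
- by apply: prodr_ile1 => i _; rewrite peak_factor_ge0 peak_factor_le1.
rewrite ler_pM2r ?invr_gt0 // lerD2l -cos_norm normrM.
rewrite (ger0_norm (_ : 0 <= 2 * pi)) ?mulr_ge0 ?pi_ge0 //.
by apply: cos2pi_le_margin => //; rewrite dx /=; move: (x0) (x1); rewrite ler_norml; lra.
Qed.

Lemma not_ball_rV a x (e : R) : 0 < e -> ~ ball a e x ->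
  exists j, e <= `|a ord0 j - x ord0 j|.
Proof.
move=> e0 nb; apply: contrapT => /forallNP hj; apply: nb; split => //= i j.
by rewrite (ord1 i) /ball /= ltNge; apply/negP => /hj.
Qed.

Lemma peak_gt_ball a x (del : R) : 0 < del ->
  (forall j, del <= a ord0 j <= 1 - del) -> closed_cube R d x ->
  (1 + cos (2 * pi * del)) / 2 < peak a x -> ball a del x.
Proof.
move=> del0 adel xcube peak_gt; apply: contrapT => nball.
have [j dj] := not_ball_rV del0 nball; move: peak_gt; apply/negP; rewrite -leNgt.
by apply: peak_le_margin (ltW del0) (adel j) (xcube j) _; rewrite distrC.
Qed.

Lemma open_cube_margin a (e : R) : open_cube R d a -> 0 < e ->
  exists2 del : R, 0 < del &
    [/\ del <= e, del <= 1/2 & forall j, del <= a ord0 j <= 1 - del].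
Proof.
move=> acube e0.
pose m := \big[Order.min/1]_(j < d) Order.min (a ord0 j) (1 - a ord0 j).
have m_gt0 : 0 < m.
  apply: lt_bigmin => // j _; rewrite lt_min.
  by have /andP[? ?] := acube j; apply/andP; split; lra.
exists (Order.min e (Order.min m (1/2))); first by rewrite !lt_min e0 m_gt0 /=; lra.
split; rewrite ?ge_min ?lexx ?orbT // => j.
have := bigmin_le (1 : R) j (fun j => Order.min (a ord0 j) (1 - a ord0 j)).
rewrite -/m le_min => /andP[? ?]; have : Order.min e (Order.min m (1/2)) <= m.
  by rewrite !ge_min lexx !orbT.
by move=> ?; apply/andP; split; lra.
Qed.

Definition grid_ball (np : nat * 'rV[int]_d) : set 'rV[R]_d :=
  ball (\row_j ((np.2 ord0 j)%:~R / np.1.+1%:R) : 'rV[R]_d) np.1.+1%:R^-1.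

Lemma grid_ball_sub x (e : R) : 0 < e ->
  exists np, grid_ball np x /\ grid_ball np `<=` ball x e.
Proof.
move=> e0; pose n := Num.truncn (2 / e); pose N : R := n.+1%:R; pose u := N^-1.
have N0 : 0 < N by rewrite ltr0n.
have u0 : 0 < u by rewrite invr_gt0.
have uN : u * N = 1 by rewrite mulVf // gt_eqF.
have ue : 2 * u < e.
  have : 2 < e * N by rewrite mulrC -ltr_pdivrMr // truncnS_gt.
  by nra.
exists (n, \row_j Num.Def.floor (x ord0 j * N)).
have x_near : grid_ball (n, \row_j Num.Def.floor (x ord0 j * N)) x.
  split=> // i j; rewrite (ord1 i) /ball /= !mxE -/N -/u.
  have xE : x ord0 j = x ord0 j * N * u by rewrite -mulrA (mulrC N) uN mulr1.
  have := floor_itv (x ord0 j * N); rewrite intrD mulr1z => /andP[f1 f2].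
  by rewrite [in X in `|_ - X|]xE ltr_norml; apply/andP; split; nra.
split => // y yB; apply: le_ball (ltW ue) _ _.
by rewrite mulr2n mulrDl mul1r; exact: ball_triangle (ball_sym x_near) yB.
Qed.

End Rd.

Section Support.
Context {R : realType} {d : nat}.
Variable mu : probability (borelRd R d) R.

Lemma open_null_notin_spt (W : set 'rV[R]_d) a :
  open W -> mu (W : set (borelRd R d)) = 0%E -> W a -> ~ spt mu a.
Proof.
move=> oW W0 Wa spta; suff : (~` W) a by [].
by apply: spta; split; [exact: open_closedC | rewrite setCK].
Qed.

Lemma not_spt_negligible_ball x : ~ spt mu x ->
  exists2 e : R, 0 < e & mu.-negligible (ball x e : set (borelRd R d)).
Proof.
rewrite /spt /bigcap /= => /existsNP [C] /not_implyP [[cC C0] nCx].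
have oC : open (~` C) by exact: closed_openC.
have /nbhs_ballP [e e0 eC] : nbhs x (~` C) by apply: open_nbhs_nbhs; split.
by exists e => //; exists (~` C); split => //; exact: sub_sigma_algebra.
Qed.

Lemma negligible_setC_spt (S : set 'rV[R]_d) :
  spt mu `<=` S -> mu.-negligible (~` S : set (borelRd R d)).
Proof.
move=> sptS.
(* The null grid balls are countably many and cover the complement of the support. *)
pose F k : set (borelRd R d) := if unpickle k is Some np then
  (if `[< mu.-negligible (grid_ball np : set (borelRd R d)) >] then grid_ball np else set0)
  else set0.
have F_negligible k : mu.-negligible (F k).
  rewrite /F; case: (unpickle k) => [np|]; last exact: negligible_set0.
  by case: asboolP => // _; exact: negligible_set0.
apply: negligibleS (negligible_bigcup F_negligible) => x nSx.
have [e e0 ex_negligible] := not_spt_negligible_ball (fun sx => nSx (sptS x sx)).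
have [np [npx np_e]] := grid_ball_sub x e0.
exists (pickle np) => //; rewrite /F pickleK.
by case: asboolP => // -[]; exact: negligibleS ex_negligible.
Qed.

Lemma open_cube_notin_spt xi a : Zset mu xi -> spt mu `<=` closed_cube R d ->
  open_cube R d a -> ~ spt mu a.
Proof.
move=> Zxi spt_cube acube.
pose h := wave xi (- (2 * pi * dotRd xi a)).
have [e e0 h_gt] := wave_gt_half_near xi a.
have [del del_gt0 [del_e del_half adel]] := open_cube_margin acube e0.
pose B := (1 + cos (2 * pi * del)) / 2; pose B' := (1 + B) / 2.
have B_ge0 : 0 <= B by exact: peak_factor_ge0.
have B_lt1 : B < 1 by have := cos2pi_lt1 del_gt0 del_half; rewrite /B; lra.
have BB' : B < B' by rewrite /B'; lra.
have B'_ge0 : 0 <= B' by rewrite /B'; lra.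
have hB x : closed_cube R d x -> B < peak a x -> 1/2 < h x.
  by move=> xcube Bx; apply/h_gt/(le_ball del_e)/(peak_gt_ball del_gt0 adel xcube Bx).
pose W := peak a @^-1` `]B', +oo[.
have oW : open W.
  by apply: open_comp; [move=> x _; exact: continuous_peak | exact: interval_open].
apply: (open_null_notin_spt oW); last by rewrite /W /= in_itv /= peak_id andbT /B'; lra.
apply: (null_of_moment_bounds (T := borelRd R d) (D := closed_cube R d) (W := W)
  (f := fun N x => h x * peak a x ^+ N) (b := B) (c := B') (k := 1/2)).
- exact: negligible_setC_spt.
- exact: sub_sigma_algebra.
- exact: B_ge0.
- exact: BB'.
- lra.
- by move=> N; exact: wave_peakX_integrable.
- move=> N; apply: Zset_coset_trigpoly_integral Zxi _.
  exact/coset_trigpolyM_peak/coset_trigpoly_wave_self.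
- move=> N x xcube; rewrite /W /= in_itv /= andbT => B'x.
  have hx : 1/2 < h x by apply: hB => //; exact: lt_trans BB' B'x.
  have B'N : B' ^+ N <= peak a x ^+ N by rewrite lerXn2r ?nnegrE ?peak_ge0 // ltW.
  by have := exprn_ge0 N B'_ge0; nra.
- move=> N x xcube _; have := exprn_ge0 N (peak_ge0 a x).
  have [Bx | xB] := ltP B (peak a x).
    by have := hB x xcube Bx; have := exprn_ge0 N B_ge0; nra.
  have : peak a x ^+ N <= B ^+ N by rewrite lerXn2r ?nnegrE ?peak_ge0.
  by have := wave_le1 xi (- (2 * pi * dotRd xi a)) x; rewrite -/h ler_norml => /andP[? ?]; nra.
Qed.

End Support.

Theorem corollary3p4 (R : realType) (d : nat) (mu : probability (borelRd R d) R) :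
  spt mu `<=` closed_cube R d ->
  Zset mu !=set0 ->
  spt mu `<=` closed_cube R d `\` open_cube R d.
Proof.
move=> spt_cube [xi Zxi] x sptx; split; first exact: spt_cube.
by move=> xcube; exact: open_cube_notin_spt Zxi spt_cube xcube sptx.
Qed.
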